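(* Let $b\ge 0$ and $h\ge 2b+1$ be integers. Let $K$ be the complete directed graph (without self-loops) on a set $H$ of $h$ vertices, i.e. $(i,j)$ is an edge for all distinct $i,j\in H$. Let $R$ be any graph obtained from $K$ by deleting, for each vertex, an arbitrary set of $b$ of its incoming edges. Then $R$ contains a source component, i.e. a vertex $v_0\in H$ having a directed path in $R$ to every other vertex of $H$.
   Context: In the paper's setting, $H$ is the set of honest nodes among $m=h+b$ nodes with $b<\frac{1}{3}m$ (so $h\ge 2b+1$), and a graph $R$ as in the claim is called a reduced graph (of the complete graph on all $m$ nodes, after deleting the $b$ Byzantine nodes with their edges). *)

From mathcomp Require Import all_boot.
Set Implicit Arguments. Unset Strict Implicit. Unset Printing Implicit Defensive.

(* A directed graph on the finite vertex type T is a relation R : rel T;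
   R i j means there is an edge (i,j) from i to j.
   The complete directed graph without self-loops has edges (i,j) for i != j. *)

(* The set of incoming edges of j that are deleted from the complete graph,
   represented by their sources. *)
Definition deleted_in (T : finType) (R : rel T) (j : T) : {set T} :=
  [set i | (i != j) && ~~ R i j].

Definition reduced_graph (T : finType) (b : nat) (R : rel T) : Prop :=
  (forall i j, R i j -> i != j) /\ (forall j, #|deleted_in R j| = b).

Definition source_vertex (T : finType) (R : rel T) (v0 : T) : Prop :=
  forall v, connect R v0 v.

From mathcomp Require Import all_boot.
From mathcomp Require Import zify.

(* In a reduced graph every vertex u, together with its in-neighbours, forms a
   set of h - b > h / 2 vertices.  Two such sets therefore meet, so any two
   vertices have a common ancestor; folding this over all vertices yields a
   common ancestor of every vertex, which is a source. *)

Set Implicit Arguments. Unset Strict Implicit. Unset Printing Implicit Defensive.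

Lemma setI_card_gt0 (T : finType) (A B : {set T}) :
  #|T| < #|A| + #|B| -> 0 < #|A :&: B|.
Proof.
have := cardsUI A B; have := max_card (A :|: B); lia.
Qed.

Section CommonAncestor.

Variables (T : finType) (R : rel T).

Definition closed_in_nbhd (u : T) : {set T} := [set w | (w == u) || R w u].

Lemma connect_closed_in_nbhd u w : w \in closed_in_nbhd u -> connect R w u.
Proof.
by rewrite inE => /orP [/eqP-> | Rwu]; [exact: connect0 | exact: connect1].
Qed.

Lemma card_closed_in_nbhd b u :
  reduced_graph b R -> #|closed_in_nbhd u| + b = #|T|.
Proof.
move=> [_ deleted_b]; rewrite -(deleted_b u) -(cardsC (closed_in_nbhd u)).
congr (_ + _); apply: eq_card => w; rewrite !inE.
by case: (w =P u) => [->|]; case: (R w u).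
Qed.

Lemma common_ancestor2_reduced b :
  reduced_graph b R -> 2 * b + 1 <= #|T| ->
  forall u v, exists w, connect R w u && connect R w v.
Proof.
move=> redR hT u v.
have : 0 < #|closed_in_nbhd u :&: closed_in_nbhd v|.
  apply: setI_card_gt0.
  have := card_closed_in_nbhd u redR; have := card_closed_in_nbhd v redR; lia.
case/card_gt0P => w; rewrite inE => /andP [wu wv].
by exists w; rewrite !connect_closed_in_nbhd.
Qed.

Lemma common_ancestor_seq (x0 : T) :
  (forall u v, exists w, connect R w u && connect R w v) ->
  forall s : seq T, exists w, all (connect R w) s.
Proof.
move=> ancestor2; elim=> [|x s [w IHs]]; first by exists x0.
have [w' /andP [w'w w'x]] := ancestor2 w x.
exists w'; rewrite /= w'x; apply/allP => y ys.
exact: connect_trans w'w (allP IHs y ys).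
Qed.

Lemma source_of_common_ancestor2 (x0 : T) :
  (forall u v, exists w, connect R w u && connect R w v) ->
  exists v0, source_vertex R v0.
Proof.
move=> ancestor2.
have [w /allP ancestor_all] := common_ancestor_seq x0 ancestor2 (enum T).
by exists w => v; apply: ancestor_all; rewrite mem_enum.
Qed.

End CommonAncestor.

Theorem lemma1 (b h : nat) (T : finType) (R : rel T) :
  #|T| = h -> 2 * b + 1 <= h -> reduced_graph b R ->
  exists v0 : T, source_vertex R v0.
Proof.
move=> <- hT redR.
have /card_gt0P [x0 _] : 0 < #|T| by lia.
exact: source_of_common_ancestor2 x0 (common_ancestor2_reduced redR hT).
Qed.
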